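(* Let $\mathcal{D}$ be the set of partitions into distinct parts, $\mathcal{D}_o$ the set of partitions into an odd number of distinct parts, $\nu(\pi)$ the number of parts of $\pi$, and for $\pi=(\lambda_1,\lambda_2,\dots)$, $\mathcal{O}(\pi)=\lambda_1+\lambda_3+\lambda_5+\cdots$. Let $\tilde C_{\le -1}$ and $\tilde C_{=0}$ be the sets of partitions with crank $\le -1$ and crank $=0$ respectively. Then, as formal power series, \[\sum_{\pi\in\mathcal{D}_o}q^{\mathcal{O}(\pi)}=\sum_{\pi\in\tilde C_{\le-1}}q^{|\pi|}\quad\text{and}\quad\sum_{\pi\in\mathcal{D}}(-1)^{\nu(\pi)}q^{\mathcal{O}(\pi)}=-q+\sum_{\pi\in\tilde C_{=0}}q^{|\pi|}.\]
   Context: A partition is a finite weakly decreasing sequence of positive integers; $|\pi|$ is the sum of its parts; the empty partition has $0$ parts. The crank of a partition $\pi$ is defined as: the largest part of $\pi$ if $1$ is not a part of $\pi$ (the empty partition has crank $0$); otherwise, (the number of parts of $\pi$ larger than the number of $1$'s in $\pi$) minus (the number of $1$'s in $\pi$). *)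

From mathcomp Require Import all_boot all_order all_algebra.
Set Implicit Arguments. Unset Strict Implicit. Unset Printing Implicit Defensive.
Import Order.TTheory GRing.Theory Num.Theory.

Definition is_partition (s : seq nat) : bool :=
  sorted geq s && all (fun x => 0 < x) s.

Definition is_distinct_partition (s : seq nat) : bool :=
  sorted gtn s && all (fun x => 0 < x) s.

Definition nparts (s : seq nat) : nat := size s.

Fixpoint oddsum (s : seq nat) : nat :=
  match s with
  | x :: _ :: t => x + oddsum t
  | [:: x] => x
  | [::] => 0
  end.

Definition omega (s : seq nat) : nat := count (pred1 1) s.

Definition largest (s : seq nat) : nat := foldr maxn 0 s.

Local Open Scope ring_scope.
Definition crank (s : seq nat) : int :=
  if omega s == 0%N then (largest s)%:Z
  else (count (fun x => (omega s < x)%N) s)%:Z - (omega s)%:Z.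
Local Close Scope ring_scope.

Fixpoint seqs_len (k b : nat) : seq (seq nat) :=
  if k is k'.+1 then [seq x :: t | x <- iota 0 b.+1, t <- seqs_len k' b]
  else [:: [::]].

(* all sequences of length <= b with entries in {0,...,b} (without repetition);
   every partition of n, and every distinct partition pi with O(pi) = n,
   belongs to bseqs n. *)
Definition bseqs (b : nat) : seq (seq nat) :=
  flatten [seq seqs_len k b | k <- iota 0 b.+1].

Definition coeff_Do_O (n : nat) : nat :=
  count (fun s => is_distinct_partition s && odd (nparts s) && (oddsum s == n))
        (bseqs n).

Definition coeff_crank_le_m1 (n : nat) : nat :=
  count (fun s => is_partition s && (sumn s == n) && (crank s <= -1)%R)
        (bseqs n).

Definition coeff_D_signed_O (n : nat) : int :=
  \sum_(s <- bseqs n | is_distinct_partition s && (oddsum s == n))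
     ((-1) ^+ nparts s)%R.

Definition coeff_crank_eq0 (n : nat) : nat :=
  count (fun s => is_partition s && (sumn s == n) && (crank s == 0%R))
        (bseqs n).

From mathcomp Require Import all_boot all_order all_algebra.
From mathcomp Require Import zify.
Import GRing.Theory Num.Theory.
Set Implicit Arguments. Unset Strict Implicit. Unset Printing Implicit Defensive.

(* Both identities go through one parametrisation by codes [(p, z)].  A partition
   [π] is coded by repeatedly peeling off its first row and first column, a distinct
   partition [λ] with an odd number of parts by reading its parts two at a time.  When
   [π] and [λ] have the same code, the number of parts 1 of [π] is the gap between the
   two largest parts of [λ] minus one, and O(λ) = |π| + k + 1, where k is the number of
   peeling steps.  Since the crank of [π] is negative exactly when [π] has more than k
   parts 1, adding k + 1 parts 1 to [π] maps the partitions [λ] bijectively onto the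
   partitions of crank at most -1, preserving the weight: this is the first identity.
   For the second one, appending a part 1, or moving one unit from the largest part to
   a new part 1, pairs off distinct partitions of lengths of opposite parity with the
   same O.  Left over are [[:: 1]] and the partitions of even length not ending in 1
   whose two largest parts are consecutive; appending 1 to these, coding them and
   adding k parts 1 gives exactly the partitions of crank 0. *)

Lemma mem_seqs_len k b s :
  (s \in seqs_len k b) = (size s == k) && all (fun x => x <= b) s.
Proof.
elim: k s => [|k IHk] s; first by case: s.
apply/allpairsP/idP => [[[y t] [Hy Ht ->]]|].
  rewrite mem_iota in Hy; rewrite -/(seqs_len k b) IHk in Ht.
  by move: Hy Ht => /= Hy /andP[/eqP-> ->]; rewrite eqxx andbT; lia.
case: s => // x s /and3P[/eqP[Hs] Hx Ht].
exists (x, s); split=> //; first by rewrite mem_iota /= ltnS Hx.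
by rewrite -/(seqs_len k b) IHk Hs eqxx.
Qed.

Lemma uniq_seqs_len k b : uniq (seqs_len k b).
Proof.
elim: k => [|k IHk] //; apply: allpairs_uniq => //; first exact: iota_uniq.
by move=> [x1 t1] [x2 t2] _ _ [-> ->].
Qed.

Lemma mem_bseqs b s : (s \in bseqs b) = (size s <= b) && all (fun x => x <= b) s.
Proof.
apply/flattenP/andP => [[t /mapP[k Hk ->]]|[Hs Hb]].
  by rewrite mem_seqs_len mem_iota in Hk * => /andP[/eqP-> ->].
exists (seqs_len (size s) b); last by rewrite mem_seqs_len eqxx.
by apply/mapP; exists (size s); rewrite // mem_iota.
Qed.

Lemma uniq_bseqs b : uniq (bseqs b).
Proof.
rewrite /bseqs; elim: b.+1 0 => [|m IHm] a //=.
rewrite cat_uniq uniq_seqs_len IHm andbT; apply/hasPn => s /flattenP[t /mapP[k Hk ->]].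
rewrite !mem_seqs_len mem_iota in Hk * => /andP[/eqP Hs _].
by apply/negP => /andP[/eqP Ha _]; lia.
Qed.

Lemma count_bijection (T1 T2 : eqType) (s1 : seq T1) (s2 : seq T2)
    (P1 : pred T1) (P2 : pred T2) (f : T1 -> T2) (g : T2 -> T1) :
  uniq s1 -> uniq s2 -> {subset P1 <= s1} -> {subset P2 <= s2} ->
  {in P1, forall x, P2 (f x)} -> {in P2, forall y, P1 (g y)} ->
  {in P1, cancel f g} -> {in P2, cancel g f} ->
  count P1 s1 = count P2 s2.
Proof.
move=> U1 U2 M1 M2 fP gP fK gK; rewrite -!size_filter.
have f_inj : {in filter P1 s1 &, injective f}.
  by move=> x y; rewrite !mem_filter => /andP[Px _] /andP[Py _] Efxy; rewrite -(fK x) // Efxy fK.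
rewrite -(size_map f); apply/perm_size/uniq_perm.
- by rewrite map_inj_in_uniq // filter_uniq.
- exact: filter_uniq.
move=> y; apply/mapP/idP => [[x]|]; rewrite mem_filter.
  by move=> /andP[Px _] ->; have fPx := fP x Px; rewrite mem_filter fPx M2.
move=> /andP[Py _]; exists (g y); rewrite ?gK //.
by have gPy := gP y Py; rewrite mem_filter gPy M1.
Qed.

Lemma count_split3 (T : Type) (a b1 b2 b3 : pred T) (r : seq T) :
  (forall x, a x = b1 x + b2 x + b3 x :> nat) ->
  count a r = count b1 r + count b2 r + count b3 r.
Proof. by move=> Hab; elim: r => //= x r ->; rewrite Hab; lia. Qed.

Lemma sum_sign_count (T : Type) (r : seq T) (P : pred T) (w : T -> nat) :
  (\sum_(x <- r | P x) (-1) ^+ w x =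
   Posz (count (fun x => P x && ~~ odd (w x)) r) - Posz (count (fun x => P x && odd (w x)) r)
   :> int)%R.
Proof.
elim: r => [|x r IHr]; first by rewrite big_nil.
rewrite big_cons IHr /=; case: (P x) => //=.
by rewrite -signr_odd; case: odd; rewrite /= ?expr0 ?expr1 PoszD; lia.
Qed.

Lemma seq_pair_ind (T : Type) (P : seq T -> Prop) :
  P [::] -> (forall a, P [:: a]) -> (forall a b s, P s -> P [:: a, b & s]) ->
  forall s, P s.
Proof.
move=> P0 P1 P2 s; have [n] := ubnP (size s); elim: n s => // n IHn [|a [|b s]] //= Hs.
by apply/P2/IHn; lia.
Qed.

Lemma geq_trans : transitive geq.
Proof. by move=> a b c /= Hba Hcb; apply: leq_trans Hcb Hba. Qed.

Lemma sorted_geq_cat_nseq0 s k : sorted geq s -> sorted geq (s ++ nseq k 0).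
Proof.
case: s => [_|a s] /=; first by elim: k => // [[|k]].
by rewrite cat_path => ->; elim: k (last a s) => //= k IHk x; apply: IHk.
Qed.

Definition code := (seq (nat * nat) * nat)%type.

(* [map S (weak_build p z)] is obtained from the partition coded by [(behead p, z)]
   by adding a first row and a first column, the head [(d, y)] of [p] fixing the
   length of the new first row and the number [y] of new parts 1; the peeling stops
   at a column of [z] ones. *)
Fixpoint weak_build (p : seq (nat * nat)) (z : nat) : seq nat :=
  if p is (d, y) :: p' then
    let r := weak_build p' z in (d + 1 + head 0 r) :: map S r ++ nseq y 0
  else nseq z 0.

Definition weak_of (t : code) : seq nat := weak_build t.1 t.2.

Definition peel (s : seq nat) : seq nat :=
  map predn (filter (fun x => 0 < x) (behead s)).

Fixpoint weak_code_rec (k : nat) (s : seq nat) : code :=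
  if k is k'.+1 then
    if 0 < head 0 s then
      let t := weak_code_rec k' (peel s) in
      ((head 0 s - 1 - head 0 (peel s), count (pred1 0) s) :: t.1, t.2)
    else ([::], size s)
  else ([::], size s).

Definition weak_code (s : seq nat) : code := weak_code_rec (size s) s.

Lemma head_weak_build p z : head 0 (weak_build p z) = sumn (unzip1 p) + size p.
Proof. by elim: p => [|[d y] p /= ->]; [case: z | lia]. Qed.

Lemma size_weak_build p z : size (weak_build p z) = z + sumn (unzip2 p) + size p.
Proof.
elim: p => [|[d y] p IHp] /=; first by rewrite size_nseq; lia.
by rewrite size_cat size_map size_nseq IHp; lia.
Qed.

Lemma sorted_weak_build p z : sorted geq (weak_build p z).
Proof.
elim: p => [|[d y] p IHp] /=; first by elim: z => // [[|z]].
rewrite (path_sortedE geq_trans) sorted_geq_cat_nseq0 ?sorted_map // andbT all_cat.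
apply/andP; split; last by apply/allP => x /nseqP[-> _].
apply/allP => _ /mapP[x Hx ->] /=.
case: (weak_build p z) IHp Hx => //= a r; rewrite (path_sortedE geq_trans).
by move=> /andP[/allP Har _]; rewrite inE => /predU1P[-> | /Har /=]; lia.
Qed.

Lemma peel_weak_build d y p z : peel (weak_build ((d, y) :: p) z) = weak_build p z.
Proof.
rewrite /peel /= filter_cat (@eq_in_filter _ _ predT) ?filter_predT; last first.
  by move=> _ /mapP[x _ ->].
rewrite (@eq_in_filter _ _ pred0) ?filter_pred0 ?cats0; last by move=> x /nseqP[->].
by rewrite -map_comp map_id.
Qed.

Lemma weak_code_rec_build k p z :
  size (weak_build p z) <= k -> weak_code_rec k (weak_build p z) = (p, z).
Proof.
elim: p z k => [|[d y] p IHp] z [|k] //=; rewrite ?size_nseq.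
- by rewrite leqn0 => /eqP->.
- by case: z.
rewrite size_cat size_map peel_weak_build addn1 ltnS => Hk.
rewrite IHp; last by apply: leq_trans Hk; apply: leq_addr.
rewrite count_cat count_nseq count_map (@eq_count _ _ pred0) ?count_pred0 //=.
by congr ((_, _) :: _, _); lia.
Qed.

Lemma weak_codeK : cancel weak_of weak_code.
Proof. by move=> [p z]; apply: weak_code_rec_build. Qed.

Lemma sorted_geq_split0 s :
  sorted geq s -> s = filter (fun x => 0 < x) s ++ nseq (count (pred1 0) s) 0.
Proof.
elim: s => [|a s IHs] //= Hs; rewrite {1}IHs; last exact: path_sorted Hs.
case: a Hs => [|a] Hs //=; rewrite (path_sortedE geq_trans) in Hs.
rewrite (@eq_in_filter _ _ pred0) ?filter_pred0 //.
by case/andP: Hs => /allP Hs _ x /Hs /=; case: x.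
Qed.

Lemma sorted_peel s : sorted geq s -> sorted geq (peel s).
Proof.
case: s => [|h s] //= /path_sorted Hs; rewrite sorted_map.
apply: sub_sorted (sorted_filter geq_trans _ Hs) => a b /=; lia.
Qed.

Lemma head_peel_lt s : sorted geq s -> 0 < head 0 s -> head 0 (peel s) < head 0 s.
Proof.
case: s => [|h s] //=; rewrite (path_sortedE geq_trans) /peel /= => /andP[Hh _] h_gt0.
case Ef: (filter _ s) => [|u f] //=.
have : u \in filter (fun x => 0 < x) s by rewrite Ef mem_head.
by rewrite mem_filter => /andP[u_gt0 /(allP Hh)] /=; lia.
Qed.

Lemma weak_build_code_rec k s :
  size s <= k -> sorted geq s -> weak_of (weak_code_rec k s) = s.
Proof.
elim: k s => [|k IHk] [|h s] // Hk Hs /=.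
case: ifP => [h_gt0|]; last first.
  move/negbT; rewrite lt0n negbK => /eqP h0; rewrite /weak_of /= h0; congr (_ :: _).
  move: Hs; rewrite h0 /= (path_sortedE geq_trans) => /andP[/allP Hs _].
  by apply/esym/all_pred1P/allP => x /Hs /=; case: x.
have Hpeel := IHk (peel (h :: s)).
rewrite /weak_of /= -/(weak_of _) Hpeel; last 2 first.
- by rewrite size_map size_filter (leq_trans (count_size _ _)).
- exact: sorted_peel.
have := head_peel_lt Hs h_gt0; rewrite /= => Hlt; congr (_ :: _); first lia.
rewrite {3}(sorted_geq_split0 (path_sorted Hs)) /peel /= (gtn_eqF h_gt0).
by rewrite -map_comp map_id_in // => x; rewrite mem_filter => /andP[/prednK].
Qed.

Lemma weak_of_code s : sorted geq s -> weak_of (weak_code s) = s.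
Proof. exact: weak_build_code_rec. Qed.

Definition nzeros (t : code) : nat := if t.1 is (_, y) :: _ then y else t.2.

Definition adjust_zeros (f : nat -> nat) (t : code) : code :=
  if t.1 is (d, y) :: p then ((d, f y) :: p, t.2) else ([::], f t.2).

Lemma size_adjust_zeros f t : size (adjust_zeros f t).1 = size t.1.
Proof. by case: t => [[|[d y] p] z]. Qed.

Lemma nzeros_adjust_zeros f t : nzeros (adjust_zeros f t) = f (nzeros t).
Proof. by case: t => [[|[d y] p] z]. Qed.

Lemma adjust_zerosK f g t :
  g (f (nzeros t)) = nzeros t -> adjust_zeros g (adjust_zeros f t) = t.
Proof. by case: t => [[|[d y] p] z]; rewrite /adjust_zeros /nzeros /= => ->. Qed.

Lemma weak_of_add_zeros k t :
  weak_of (adjust_zeros (addn^~ k) t) = weak_of t ++ nseq k 0.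
Proof. by case: t => [[|[d y] p] z]; rewrite /weak_of /= nseqD ?catA. Qed.

Lemma count0_weak_of t : count (pred1 0) (weak_of t) = nzeros t.
Proof.
case: t => [[|[d y] p] z]; rewrite /weak_of /= ?count_nseq ?mul1n //.
by rewrite count_cat count_map count_nseq (@eq_count _ _ pred0) ?count_pred0 //= addn1 addSn mul1n.
Qed.

Lemma leq_count_weak_of k t :
  (k <= count (fun x => k <= x) (weak_of t)) = (k <= size t.1).
Proof.
case: t => p z; rewrite /weak_of /=; elim: p k => [|[d y] p IHp] [|k] //=.
  by rewrite count_nseq.
rewrite count_cat count_map count_nseq mul0n addn0 ltnS -IHp.
rewrite (@eq_count _ _ (fun x => k <= x)) // head_weak_build.
have := IHp k; case: (leqP k (size p)) => Hk; case: leqP => //; lia.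
Qed.

Lemma count_size_weak_of t :
  count (fun x => size t.1 <= x) (weak_of t) = size t.1 + t.2.
Proof.
case: t => p z; rewrite /weak_of /=; elim: p => [|[d y] p IHp] /=.
  by rewrite count_nseq mul1n.
rewrite count_cat count_map count_nseq mul0n addn0 head_weak_build.
by rewrite (@eq_count _ _ (fun x => size p <= x)) // IHp; lia.
Qed.

Definition part_of (t : code) : seq nat := map S (weak_of t).

Definition part_code (s : seq nat) : code := weak_code (map predn s).

Lemma is_partition_part_of t : is_partition (part_of t).
Proof.
rewrite /is_partition sorted_map sorted_weak_build.
by apply/allP => _ /mapP[x _ ->].
Qed.

Lemma part_codeK : cancel part_of part_code.
Proof. by move=> t; rewrite /part_code /part_of (mapK succnK) weak_codeK. Qed.

Lemma part_of_code s : is_partition s -> part_of (part_code s) = s.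
Proof.
case/andP=> Hs Hpos; rewrite /part_of weak_of_code.
  by rewrite -map_comp map_id_in // => x /(allP Hpos) /prednK.
by rewrite sorted_map; apply: sub_sorted Hs => a b /=; lia.
Qed.

Lemma sumn_map_succ s : sumn (map S s) = sumn s + size s.
Proof. by elim: s => //= x s ->; lia. Qed.

Lemma sumn_part_of t : sumn (part_of t) = sumn (weak_of t) + size (weak_of t).
Proof. exact: sumn_map_succ. Qed.

Lemma sumn_part_of_add_zeros k t :
  sumn (part_of (adjust_zeros (addn^~ k) t)) = sumn (part_of t) + k.
Proof.
rewrite !sumn_part_of weak_of_add_zeros sumn_cat size_cat sumn_nseq size_nseq.
by rewrite mul0n; lia.
Qed.

Lemma sumn_part_of_sub_zeros k t :
  k <= nzeros t -> sumn (part_of (adjust_zeros (subn^~ k) t)) + k = sumn (part_of t).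
Proof. by move=> Hk; rewrite -sumn_part_of_add_zeros adjust_zerosK //= subnK. Qed.

Lemma crank_map_succ s :
  crank (map S s) =
  if count (pred1 0) s == 0 then Posz (largest (map S s))
  else (Posz (count (fun x => count (pred1 0%N) s <= x)%N s) - Posz (count (pred1 0%N) s))%R.
Proof. by rewrite /crank /omega !count_map. Qed.

Lemma crank_part_of_le_m1 t : (crank (part_of t) <= -1)%R = (size t.1 < nzeros t).
Proof.
rewrite crank_map_succ count0_weak_of.
have := leq_count_weak_of (nzeros t) t.
by case: eqP => [-> //|_]; rewrite ltnNge => <-; lia.
Qed.

Lemma largest_map_succ_eq0 s : (largest (map S s) == 0) = (s == [::]).
Proof. by case: s => //= x s; rewrite -leqn0 geq_max. Qed.

Lemma crank_part_of_eq0 t :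
  (crank (part_of t) == 0%R) = (t.2 == 0) && (nzeros t == size t.1).
Proof.
rewrite crank_map_succ count0_weak_of.
case: (nzeros t =P 0) => [n0|_].
  rewrite n0 eqz_nat largest_map_succ_eq0 -size_eq0 size_weak_build.
  by case: t n0 => [[|[d y] p] z] /= n0; lia.
have := leq_count_weak_of (nzeros t) t; have := count_size_weak_of t.
have : nzeros t <= size t.1 ->
  count (fun x => size t.1 <= x) (weak_of t) <= count (fun x => nzeros t <= x) (weak_of t).
  by move=> Hle; apply: sub_count => x /=; apply: leq_trans.
set a := count _ _; set b := count _ _; rewrite subr_eq0 eqz_nat.
case: leqP => Hle.
  move=> /(_ isT) Hab Ha Hb; apply/eqP/andP => [Ebw|[/eqP z0 /eqP wsz]].
    by split; apply/eqP; lia.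
  by rewrite /b wsz -/a Ha z0 addn0.
move=> _ _ /negbT; rewrite -ltnNge => Hb.
by rewrite (ltn_eqF Hb) (gtn_eqF Hle) andbF.
Qed.

Lemma is_distinct_partition_cons a s :
  is_distinct_partition (a :: s) = (head 0 s < a) && is_distinct_partition s.
Proof.
case: s => [|b s]; rewrite /is_distinct_partition /= ?andbT //.
by case: (ltnP b a) => //= Hab; rewrite (leq_ltn_trans _ Hab) //; case: (sorted _ _).
Qed.

Lemma last_distinct_gt0 s : is_distinct_partition s -> s != [::] -> 0 < last 0 s.
Proof.
elim: s => //= a s IHs; rewrite is_distinct_partition_cons => /andP[Hlt Hs] _.
by case: s IHs Hlt Hs => [|b s] IHs Hlt Hs //=; apply: IHs.
Qed.

(* Each pair [(x, y)] describes two consecutive parts: [x + 1] and [y + 1] are the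
   gaps below and above the second of them; the smallest part is [z + 1]. *)
Fixpoint dist_build (p : seq (nat * nat)) (z : nat) : seq nat :=
  if p is (x, y) :: p' then
    let s := dist_build p' z in (head 0 s + x + y + 2) :: (head 0 s + x + 1) :: s
  else [:: z.+1].

Definition dist_of (t : code) : seq nat := dist_build t.1 t.2.

Fixpoint dist_code (s : seq nat) : code :=
  match s with
  | a :: b :: s' => let t := dist_code s' in ((b - head 0 s' - 1, a - b - 1) :: t.1, t.2)
  | [:: a] => ([::], a.-1)
  | [::] => ([::], 0)
  end.

Lemma head_dist_build p z :
  head 0 (dist_build p z) = z + 1 + sumn (unzip1 p) + sumn (unzip2 p) + (size p).*2.
Proof. by elim: p => [|[x y] p /= ->] /=; lia. Qed.

Lemma size_dist_of t : size (dist_of t) = (size t.1).*2.+1.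
Proof. by case: t => p z; rewrite /dist_of; elim: p => [|[x y] p /= ->]. Qed.

Lemma is_distinct_partition_dist_of t : is_distinct_partition (dist_of t).
Proof.
case: t => p z; rewrite /dist_of; elim: p => [|[x y] p IHp] //=.
by rewrite !is_distinct_partition_cons IHp /= andbT; apply/andP; split; lia.
Qed.

Lemma last_dist_of t : last 0 (dist_of t) = t.2.+1.
Proof. by case: t => p z; rewrite /dist_of; elim: p => [|[x y] p] //=; case: dist_build. Qed.

Lemma dist_codeK : cancel dist_of dist_code.
Proof.
case=> p z; rewrite /dist_of; elim: p => [|[x y] p /= ->] //=.
by congr ((_, _) :: _, _); lia.
Qed.

Lemma dist_of_code s :
  is_distinct_partition s -> odd (size s) -> dist_of (dist_code s) = s.
Proof.
elim/seq_pair_ind: s => [|a|a b s IHs] //.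
  by rewrite /is_distinct_partition /= andbT; case: a.
rewrite !is_distinct_partition_cons /= negbK => /and3P[Hab Hb Hs] Hodd.
move: (IHs Hs Hodd); rewrite /dist_of /= => ->.
by congr [:: _, _ & _]; lia.
Qed.

Lemma oddsum_dist_of t : oddsum (dist_of t) = sumn (part_of t) + size t.1 + 1.
Proof.
case: t => p z; rewrite sumn_part_of /dist_of /weak_of /=.
elim: p => [|[x y] p IHp] /=; first by rewrite sumn_nseq size_nseq; lia.
rewrite IHp sumn_cat sumn_map_succ sumn_nseq size_cat size_map size_nseq.
by rewrite head_dist_build head_weak_build size_weak_build; lia.
Qed.

Lemma head_dist_of t :
  t.1 != [::] -> head 0 (dist_of t) = nth 0 (dist_of t) 1 + nzeros t + 1.
Proof. by case: t => [[|[x y] p] z] //= _; rewrite /nzeros /=; lia. Qed.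

Lemma partition_in_bseqs s : is_partition s -> s \in bseqs (sumn s).
Proof.
case/andP=> _; rewrite mem_bseqs.
elim: s => //= a s IHs /andP[a_pos /IHs/andP[Hsz /allP Hall]].
apply/and3P; split; [lia | exact: leq_addr |].
by apply/allP => x /Hall Hx; apply: leq_trans Hx (leq_addl _ _).
Qed.

Lemma distinct_partition_in_bseqs s :
  is_distinct_partition s -> s \in bseqs (oddsum s).
Proof.
move=> Hs; have head_le : head 0 s <= oddsum s.
  by case: s {Hs} => [|a [|b s]] //=; apply: leq_addr.
suff /andP[Hsz /allP Hall] : (size s <= head 0 s) && all (fun x => x <= head 0 s) s.
  rewrite mem_bseqs (leq_trans Hsz head_le); apply/allP => x /Hall Hx.
  exact: leq_trans Hx head_le.
elim: s Hs {head_le} => //= a s IHs.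
rewrite is_distinct_partition_cons => /andP[Hlt /IHs/andP[Hsz /allP Hall]].
rewrite leqnn (leq_ltn_trans Hsz Hlt); apply/allP => x /Hall Hx.
exact: ltnW (leq_ltn_trans Hx Hlt).
Qed.

Lemma coeff_Do_O_crank_le_m1 n : coeff_Do_O n = coeff_crank_le_m1 n.
Proof.
pose shift (t : code) := (size t.1).+1.
rewrite /coeff_Do_O /coeff_crank_le_m1.
apply: (@count_bijection _ _ _ _ _ _
  (fun s => let t := dist_code s in part_of (adjust_zeros (addn^~ (shift t)) t))
  (fun s => let t := part_code s in dist_of (adjust_zeros (subn^~ (shift t)) t)));
  rewrite ?uniq_bseqs //.
- by move=> s /andP[/andP[Hs _] /eqP <-]; apply: distinct_partition_in_bseqs.
- by move=> s /andP[/andP[Hs /eqP <-] _]; apply: partition_in_bseqs.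
- move=> s /andP[/andP[Hs Hodd] /eqP <-] /=; set t := dist_code s.
  rewrite is_partition_part_of crank_part_of_le_m1 size_adjust_zeros.
  rewrite nzeros_adjust_zeros sumn_part_of_add_zeros -(dist_of_code Hs Hodd) oddsum_dist_of.
  by rewrite -/t /shift addn1 addnS !eqxx addnS ltnS leq_addl.
- move=> s /andP[/andP[Hs /eqP <-] Hcrank] /=; set t := part_code s.
  have Ht : shift t <= nzeros t by rewrite -crank_part_of_le_m1 part_of_code.
  rewrite is_distinct_partition_dist_of /nparts size_dist_of /= odd_double oddsum_dist_of.
  rewrite size_adjust_zeros addn1 -(part_of_code Hs) -/t -(sumn_part_of_sub_zeros Ht).
  by rewrite /shift addnS eqxx.
- move=> s /andP[/andP[Hs Hodd] _] /=.
  by rewrite part_codeK /shift size_adjust_zeros adjust_zerosK ?addnK // dist_of_code.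
- move=> s /andP[/andP[Hs _] Hcrank] /=; set t := part_code s.
  have Ht : shift t <= nzeros t by rewrite -crank_part_of_le_m1 part_of_code.
  by rewrite dist_codeK /shift size_adjust_zeros adjust_zerosK ?subnK // part_of_code.
Qed.

Definition droplast (s : seq nat) : seq nat := if s is a :: s' then belast a s' else [::].

Lemma droplast_rcons s x : droplast (rcons s x) = s.
Proof. by case: s => [|a s] //=; rewrite belast_rcons. Qed.

Lemma rcons_droplast s : last 0 s = 1 -> rcons (droplast s) 1 = s.
Proof. by case: s => [|a s] //= <-; rewrite -lastI. Qed.

Lemma oddsum_rcons s x : oddsum (rcons s x) = oddsum s + (if odd (size s) then 0 else x).
Proof. by elim/seq_pair_ind: s => [|a|a b s IHs] //=; rewrite IHs negbK addnA. Qed.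

Lemma is_distinct_partition_rcons s x : s != [::] ->
  is_distinct_partition (rcons s x) = [&& is_distinct_partition s, x < last 0 s & 0 < x].
Proof.
elim: s => [|a s IHs] // _; rewrite rcons_cons !is_distinct_partition_cons.
case: s IHs => [|b s] IHs /=.
  rewrite is_distinct_partition_cons /= !andbT.
  by case: (ltnP x a) => Hxa; rewrite ?andbF //= (leq_ltn_trans (leq0n x) Hxa).
by rewrite -rcons_cons IHs // !andbA.
Qed.

Definition dist_weighted n s := is_distinct_partition s && (oddsum s == n).

Lemma dist_weighted_in_bseqs n s : dist_weighted n s -> s \in bseqs n.
Proof. by case/andP=> Hs /eqP <-; apply: distinct_partition_in_bseqs. Qed.

Definition even_ending1 n s := dist_weighted n s && ~~ odd (size s) && (last 0 s == 1).

Definition odd_ending_big n s := dist_weighted n s && odd (size s) && (last 0 s != 1).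

Lemma even_ending1_rcons n s : even_ending1 n (rcons s 1) = odd_ending_big n s.
Proof.
rewrite /even_ending1 /odd_ending_big /dist_weighted size_rcons /= negbK last_rcons eqxx andbT.
case: s => [|a s]; first by rewrite !andbF.
rewrite is_distinct_partition_rcons // oddsum_rcons.
case: (odd _); rewrite ?andbF // addn0.
case Hd: (is_distinct_partition _) => //.
move: (oddsum _ == n) (last_distinct_gt0 Hd isT) => b.
by case: (last _ _) => [|[|l]] //= _; rewrite ?andbT ?andbF.
Qed.

Lemma count_even_ending1 n :
  count (even_ending1 n) (bseqs n) = count (odd_ending_big n) (bseqs n).
Proof.
apply: (count_bijection (f := droplast) (g := rcons^~ 1)); rewrite ?uniq_bseqs //.
- by move=> s /andP[/andP[/dist_weighted_in_bseqs]].
- by move=> s /andP[/andP[/dist_weighted_in_bseqs]].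
- by move=> s Hs; rewrite -even_ending1_rcons rcons_droplast //; case/andP: Hs => _ /eqP.
- by move=> s Hs; rewrite /= even_ending1_rcons.
- by move=> s /andP[_ /eqP]; apply: rcons_droplast.
- by move=> s _; apply: droplast_rcons.
Qed.

Definition incr_head (s : seq nat) : seq nat := if s is a :: s' then a.+1 :: s' else s.

Definition decr_head (s : seq nat) : seq nat := if s is a :: s' then a.-1 :: s' else s.

Definition even_big_top_gap n s :=
  dist_weighted n s && ~~ odd (size s) && (last 0 s != 1) && ((nth 0 s 1).+1 < head 0 s).

Definition odd_ending1 n s :=
  dist_weighted n s && odd (size s) && (last 0 s == 1) && (s != [:: 1]).

Lemma even_big_top_gap_incr_head n s :
  even_big_top_gap n (incr_head s) = odd_ending1 n (rcons s 1).
Proof.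
rewrite /even_big_top_gap /odd_ending1 /dist_weighted.
case: s => [|a [|b s]]; rewrite /= ?andbF //.
rewrite -!rcons_cons is_distinct_partition_rcons // !is_distinct_partition_cons oddsum_rcons.
rewrite size_rcons last_rcons /= !negbK ltnS eqxx !andbT.
case: (odd (size s)); rewrite ?andbF // ltnS addn1 addnS eqseq_cons andbF andbT.
have last_gt0 : head 0 s < b -> is_distinct_partition s -> 0 < last b s.
  by move=> Hb Hs; apply: (@last_distinct_gt0 (b :: s)); rewrite ?is_distinct_partition_cons ?Hb.
case: (ltnP b a) => Hab; rewrite ?(ltnW Hab) ?andbF //=.
case: (head 0 s < b) last_gt0; case: (is_distinct_partition s) => //= /(_ isT isT).
by case: (last b s) => [|[|l]] //= _; rewrite ?andbF ?andbT ?addSn.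
Qed.

Lemma incr_headK : cancel incr_head decr_head.
Proof. by case. Qed.

Lemma decr_headK s : 0 < head 0 s -> incr_head (decr_head s) = s.
Proof. by case: s => [|[|a] s]. Qed.

Lemma count_even_big_top_gap n :
  count (even_big_top_gap n) (bseqs n) = count (odd_ending1 n) (bseqs n).
Proof.
have head_gt0 s : even_big_top_gap n s -> 0 < head 0 s.
  by case/andP=> _; apply: leq_trans.
apply: (count_bijection (f := fun s => rcons (decr_head s) 1)
                        (g := fun s => incr_head (droplast s))); rewrite ?uniq_bseqs //.
- by move=> s /andP[/andP[/andP[/dist_weighted_in_bseqs]]].
- by move=> s /andP[/andP[/andP[/dist_weighted_in_bseqs]]].
- by move=> s Hs; rewrite -even_big_top_gap_incr_head decr_headK ?head_gt0.
- move=> s Hs; rewrite even_big_top_gap_incr_head rcons_droplast //.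
  by case/andP: Hs => /andP[_ /eqP].
- by move=> s Hs; rewrite /= droplast_rcons decr_headK ?head_gt0.
- move=> s Hs; rewrite /= incr_headK rcons_droplast //.
  by case/andP: Hs => /andP[_ /eqP].
Qed.

Definition even_unit_top_gap n s :=
  dist_weighted n s && ~~ odd (size s) && (last 0 s != 1) && (head 0 s <= (nth 0 s 1).+1).

(* [dist_of t] ends with the part 1 and its two largest parts are consecutive. *)
Definition tight (t : code) := (t.2 == 0) && (nzeros t == 0).

Lemma crank_part_of_add_zeros_eq0 t :
  (crank (part_of (adjust_zeros (addn^~ (size t.1)) t)) == 0%R) = tight t.
Proof.
rewrite crank_part_of_eq0 size_adjust_zeros nzeros_adjust_zeros /tight.
by case: t => [[|[d y] p] z]; rewrite /nzeros /= ?addn0 ?andbb // -{2}(add0n (size p).+1) eqn_add2r.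
Qed.

Lemma even_unit_top_gap_dist_of n t : tight t ->
  even_unit_top_gap n (droplast (dist_of t)) = (sumn (part_of t) + size t.1 == n).
Proof.
case/andP=> /eqP t2 /eqP nz; have Eu : rcons (droplast (dist_of t)) 1 = dist_of t.
  by rewrite rcons_droplast // last_dist_of t2.
case: (t.1 =P [::]) => [t1|/eqP t1].
  case: t t1 t2 Eu {nz} => p z /= -> -> _.
  by rewrite /even_unit_top_gap /dist_weighted /=; case: n.
move: Eu; set s := droplast _ => Eu.
have size_s : size s = (size t.1).*2 by move: (size_dist_of t); rewrite -Eu size_rcons => -[].
move: (is_distinct_partition_dist_of t) (oddsum_dist_of t) (head_dist_of t1).
rewrite -Eu nz addn0 oddsum_rcons size_s odd_double addn1.
case: s size_s {Eu} => [|a [|b s]] size_s; first by case: (t.1) t1 size_s.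
  by case: (t.1) t1 size_s => // ? ? _; rewrite doubleS.
rewrite is_distinct_partition_rcons //= => /and3P[Hd Hl _]; rewrite addn1 => -[<-] Ha.
rewrite /even_unit_top_gap /dist_weighted Hd size_s odd_double /= (gtn_eqF Hl).
by rewrite Ha addn1 leqnn !andbT.
Qed.

Lemma even_unit_top_gap_code n s : even_unit_top_gap n s ->
  tight (dist_code (rcons s 1)) /\ dist_of (dist_code (rcons s 1)) = rcons s 1.
Proof.
case/andP=> /andP[/andP[/andP[Hd _] Hev] Hl] Hh.
have Eu : dist_of (dist_code (rcons s 1)) = rcons s 1.
  apply: dist_of_code; last by rewrite size_rcons /= Hev.
  case: s Hd Hl {Hev Hh} => [|a s] Hd Hl //; rewrite is_distinct_partition_rcons // Hd andbT.
  by move: Hl (last_distinct_gt0 Hd isT); case: (last 0 _) => [|[|l]].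
split=> //; move: Eu; move Et: (dist_code _) => t Eu.
have t2 : t.2 = 0 by have := last_dist_of t; rewrite Eu last_rcons => -[].
rewrite /tight t2 eqxx /=; case: (t.1 =P [::]) => [t1|/eqP t1]; first by rewrite /nzeros t1 t2.
have := head_dist_of t1; have := size_dist_of t; rewrite Eu size_rcons.
case: s Hh {Hd Hl Hev Eu Et} => [|a [|b s]] Hh; first by case: (t.1) t1.
  by case: (t.1) t1 => // ? ? _; rewrite doubleS.
by move: Hh => /= Hh _ Ha; apply/eqP; lia.
Qed.

Lemma crank_eq0_tight s : is_partition s -> crank s == 0%R ->
  let t := part_code s in nzeros t = size t.1 /\ tight (adjust_zeros (subn^~ (size t.1)) t).
Proof.
move=> Hs; rewrite -{1}(part_of_code Hs) crank_part_of_eq0 /= => /andP[t2 /eqP Hnz]; split=> //.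
rewrite -crank_part_of_add_zeros_eq0 size_adjust_zeros adjust_zerosK ?Hnz ?subnK //.
by rewrite crank_part_of_eq0 t2 Hnz eqxx.
Qed.

Lemma count_even_unit_top_gap n :
  count (even_unit_top_gap n) (bseqs n) = coeff_crank_eq0 n.
Proof.
apply: (count_bijection
  (f := fun s => let t := dist_code (rcons s 1) in part_of (adjust_zeros (addn^~ (size t.1)) t))
  (g := fun s => let t := part_code s in droplast (dist_of (adjust_zeros (subn^~ (size t.1)) t))));
  rewrite ?uniq_bseqs //.
- by move=> s /andP[/andP[/andP[/dist_weighted_in_bseqs]]].
- by move=> s /andP[/andP[Hs /eqP <-] _]; apply: partition_in_bseqs.
- move=> s Hs /=; have [Ht Eu] := even_unit_top_gap_code Hs.
  rewrite is_partition_part_of crank_part_of_add_zeros_eq0 Ht sumn_part_of_add_zeros andbT.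
  by rewrite -even_unit_top_gap_dist_of // Eu droplast_rcons.
- move=> s /andP[/andP[Hs /eqP <-] Hc] /=; set t := part_code s.
  have [Hnz Ht] := crank_eq0_tight Hs Hc.
  rewrite even_unit_top_gap_dist_of // size_adjust_zeros.
  by rewrite sumn_part_of_sub_zeros ?Hnz // part_of_code.
- move=> s Hs /=; have [Ht Eu] := even_unit_top_gap_code Hs.
  by rewrite part_codeK size_adjust_zeros adjust_zerosK ?addnK // Eu droplast_rcons.
- move=> s /andP[/andP[Hs _] Hc] /=; set t := part_code s.
  have [Hnz /andP[/eqP t2 _]] := crank_eq0_tight Hs Hc.
  rewrite rcons_droplast ?last_dist_of ?t2 // dist_codeK size_adjust_zeros.
  by rewrite adjust_zerosK ?Hnz ?subnK // part_of_code.
Qed.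

Lemma even_split n s :
  (dist_weighted n s && ~~ odd (size s) : nat) =
  even_ending1 n s + even_unit_top_gap n s + even_big_top_gap n s.
Proof.
rewrite /even_ending1 /even_unit_top_gap /even_big_top_gap.
case: (dist_weighted n s && _) => //=; case: (last 0 s == 1) => //=.
by case: leqP.
Qed.

Lemma odd_split n s :
  (dist_weighted n s && odd (size s) : nat) =
  odd_ending_big n s + odd_ending1 n s + (dist_weighted n s && (s == [:: 1])).
Proof.
rewrite /odd_ending_big /odd_ending1; case: (s =P [:: 1]) => [->|_] /=.
  by rewrite !andbF andbT; case: dist_weighted.
by rewrite !andbF !andbT addn0; case: (dist_weighted n s && _); case: eqP.
Qed.

Lemma count_unit_part n :
  count (fun s => dist_weighted n s && (s == [:: 1])) (bseqs n) = (n == 1).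
Proof.
rewrite (@eq_count _ _ (fun s => (n == 1) && (s == [:: 1]))); last first.
  by move=> s; case: eqP => [->|]; rewrite ?andbF // /dist_weighted /= eq_sym andbT.
by case: (n =P 1) => [->|_] //=; rewrite (@eq_count _ _ pred0) ?count_pred0.
Qed.

Local Open Scope ring_scope.

Theorem theorem15 :
  (forall n : nat, coeff_Do_O n = coeff_crank_le_m1 n) /\
  (forall n : nat,
     coeff_D_signed_O n = - ((n == 1%N)%:R : int) + (coeff_crank_eq0 n)%:Z).
Proof.
split=> [|n]; first exact: coeff_Do_O_crank_le_m1.
rewrite /coeff_D_signed_O /nparts sum_sign_count.
rewrite (count_split3 _ (even_split n)) (count_split3 _ (odd_split n)).
rewrite count_even_ending1 count_even_big_top_gap count_even_unit_top_gap count_unit_part.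
by case: (n == 1%N); rewrite /= ?PoszD; lia.
Qed.
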